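(* Let $G=\langle V,E\rangle$ be a DAG and let $\pi$ be an $\mathcal{H}^{(\ast)}$-partition of $G$. Then there exists a topological sorting $\varrho$ of $G$ such that $|\pi^{E}_\varrho|\le|\pi|$.
   Context: A DAG is a finite directed acyclic graph. For $V_1\subseteq V$, $G[V_1]$ is the induced subgraph. A partition $\pi=\{V_1,\dots,V_k\}$ of $V$ is an $\mathcal{H}^k$-partition if each $G[V_i]$ has a directed Hamiltonian path. The quotient digraph $G/\pi$ has vertex set $\pi$ and an arc $\langle V_i,V_j\rangle$ ($i\ne j$) whenever some arc of $E$ goes from a vertex of $V_i$ to a vertex of $V_j$. An $\mathcal{H}^{(\ast)}$-partition is an $\mathcal{H}^k$-partition (for some positive integer $k$) for which $G/\pi$ is acyclic. A topological sorting of $G$ is a bijection $\tau:V\to\{1,\dots,|V|\}$ with $\tau(u)<\tau(v)$ for every $\langle u,v\rangle\in E$. A path $\langle u_1,\dots,u_n\rangle$ ($n\ge1$) of $G$ is a $\tau,E$-path if $\tau(u_{i+1})=\tau(u_i)+1$ for all $i<n$; it is maximal if its vertex set is not contained in the vertex set of any other $\tau,E$-path. $\pi^{E}_\tau$ denotes the set of vertex sets of maximal $\tau,E$-paths. *)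

From mathcomp Require Import all_boot.
Set Implicit Arguments. Unset Strict Implicit. Unset Printing Implicit Defensive.

Definition acyclic (T : finType) (E : rel T) : Prop :=
  forall (x : T) (p : seq T), path E x p -> last x p = x -> p = [::].

(* G[A] has a directed Hamiltonian path: a duplicate-free sequence covering
   exactly A whose consecutive elements are arcs (all arcs lie within A). *)
Definition has_ham_path (V : finType) (E : rel V) (A : {set V}) : Prop :=
  exists s : seq V, [/\ uniq s, [set x in s] = A & sorted E s].

Definition quot_rel (V : finType) (E : rel V) (pi : {set {set V}}) : rel {set V} :=
  fun X Y => [&& X \in pi, Y \in pi, X != Y &
              [exists x in X, exists y in Y, E x y]].

(* H^k-partition for k = #|pi| >= 1, with acyclic quotient. *)
Definition Hstar_partition (V : finType) (E : rel V) (pi : {set {set V}}) : Prop :=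
  [/\ partition pi [set: V], 0 < #|pi|,
      (forall X, X \in pi -> has_ham_path E X) &
      acyclic (quot_rel E pi)].

(* Topological sorting (0-based values 0..|V|-1 instead of 1..|V|). *)
Definition topo_sort (V : finType) (E : rel V) (tau : V -> 'I_#|V|) : Prop :=
  bijective tau /\ (forall u v, E u v -> tau u < tau v).

Definition tauE_path (V : finType) (E : rel V) (tau : V -> 'I_#|V|) (s : seq V) : Prop :=
  s != [::] /\ sorted (fun u v => E u v && (nat_of_ord (tau v) == (tau u).+1)) s.

Definition maximal_tauE_path (V : finType) (E : rel V) (tau : V -> 'I_#|V|)
  (s : seq V) : Prop :=
  tauE_path E tau s /\
  forall t, tauE_path E tau t -> [set x in s] \subset [set x in t] ->
            [set x in s] = [set x in t].

Definition in_pi_tauE (V : finType) (E : rel V) (tau : V -> 'I_#|V|) (A : {set V}) : Prop :=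
  exists s, maximal_tauE_path E tau s /\ A = [set x in s].

From mathcomp Require Import all_boot.
From Stdlib Require Import ClassicalEpsilon.
Set Implicit Arguments. Unset Strict Implicit. Unset Printing Implicit Defensive.

(* Repeatedly setting aside a sink of the acyclic quotient G/pi lists V so that
   every arc goes forward and every block of pi occupies a contiguous segment,
   traversed along its Hamiltonian path; let rho be the position in this list.
   Inside a block every vertex but the first is entered by a rho,E-step from its
   predecessor, so each block contains at most one vertex that no rho,E-step
   enters. The head of a maximal rho,E-path is such a vertex and the only one on
   the path, and since rho,E-paths leaving a vertex are prefixes of each other,
   a maximal path is determined by its head. Hence at most |pi| maximal paths. *)

Lemma acyclic_connect_rel (T : finType) (R : rel T) x y :
  acyclic R -> connect R y x -> ~~ R x y.
Proof.
move=> Racyc /connectP [p Rp xlast]; apply/negP => Rxy.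
by have := Racyc x (y :: p); rewrite /= Rxy Rp -xlast => /(_ erefl erefl).
Qed.

Lemma acyclic_sink (T : finType) (R : rel T) (A : {set T}) x0 :
  acyclic R -> x0 \in A -> exists2 x, x \in A & {in A, forall y, ~~ R x y}.
Proof.
move=> Racyc Ax0.
case: (@arg_minnP _ _ (mem A) (fun x => #|[set y | connect R x y]|) Ax0).
move=> x Ax xmin; exists x => // y Ay; apply/negP => Rxy.
have : [set z | connect R y z] \proper [set z | connect R x z].
  apply/properP; split.
    by apply/subsetP => z; rewrite !inE; apply: connect_trans (connect1 Rxy).
  exists x; rewrite !inE ?connect0 //.
  exact: contraL (acyclic_connect_rel Racyc) Rxy.
by move/proper_card; rewrite ltnNge xmin.
Qed.

Lemma sorted_acyclic_index (T : finType) (R : rel T) (s : seq T) u v :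
  acyclic R -> sorted R s -> u \in s -> v \in s -> R u v -> index u s < index v s.
Proof.
move=> Racyc Rs us vs Ruv; rewrite ltnNge; apply/negP => vu.
have Rs' : sorted (connect R) s by apply: sub_sorted Rs => a b; apply: connect1.
have := sorted_leq_nth (@connect_trans _ R) (@connect0 _ R) u Rs' (index v s) (index u s).
rewrite !inE !index_mem !nth_index // => /(_ vs us vu).
by move/(acyclic_connect_rel Racyc); rewrite Ruv.
Qed.

Lemma path_mem_pred (T : eqType) (r : rel T) x t y :
  path r x t -> y \in t -> exists2 p, p \in x :: t & r p y.
Proof.
elim: t x => [|a t IH] x //= /andP [rxa at_path]; rewrite inE => /predU1P [->|yt].
  by exists x; rewrite ?mem_head.
by have [p pt rpy] := IH a at_path yt; exists p; rewrite // inE pt orbT.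
Qed.

Lemma leq_card_rel (A B : finType) (P : {set A}) (Q : {set B}) (r : A -> B -> bool) :
  {in P, forall a, exists2 b, b \in Q & r a b} ->
  {in P &, forall a a', {in Q, forall b, r a b -> r a' b -> a = a'}} ->
  #|P| <= #|Q|.
Proof.
move=> r_total r_inj; pose f a := [pick b in Q | r a b].
have fP a : a \in P -> exists2 b, f a = Some b & (b \in Q) && r a b.
  move=> aP; rewrite /f; case: pickP => [b bP|none]; first by exists b.
  by have [b bQ rab] := r_total a aP; move: (none b); rewrite bQ rab.
rewrite -(card_in_imset (f := f)); last first.
  move=> a a' aP a'P; have [b -> /andP [bQ rab]] := fP a aP.
  have [b' -> /andP [_ ra'b']] := fP a' a'P => -[eq_bb'].
  by apply: (r_inj a a' aP a'P b bQ rab); rewrite eq_bb'.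
rewrite -(card_imset Q (@Some_inj _)); apply/subset_leq_card/subsetP.
by move=> _ /imsetP [a aP ->]; have [b -> /andP [bQ _]] := fP a aP; apply: imset_f.
Qed.

Lemma exists_finset_pred (T : finType) (Q : T -> Prop) :
  exists P : {set T}, forall A, A \in P <-> Q A.
Proof.
exists [set A | if excluded_middle_informative (Q A) then true else false] => A.
by rewrite inE; case: excluded_middle_informative.
Qed.

Definition block_linearization (V : finType) (E : rel V) (Q : {set {set V}})
    (S : seq V) : Prop :=
  [/\ uniq S, S =i cover Q,
      {in cover Q &, forall u v, E u v -> index u S < index v S} &
      {in Q, forall X, exists l s r, [/\ [set x in s] = X, sorted E s & S = l ++ s ++ r]}].

Section Linearization.
Variables (V : finType) (E : rel V) (pi : {set {set V}}).
Hypotheses (E_acyclic : acyclic E) (pi_trivI : trivIset pi).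
Hypotheses (pi_ham : {in pi, forall X, has_ham_path E X})
           (quot_acyclic : acyclic (quot_rel E pi)).

Lemma block_linearization_cat (Q : {set {set V}}) X S (s : seq V) :
  Q \subset pi -> X \in Q -> {in Q, forall Y, ~~ quot_rel E pi X Y} ->
  block_linearization E (Q :\ X) S -> uniq s -> [set x in s] = X -> sorted E s ->
  block_linearization E Q (S ++ s).
Proof.
move=> Qpi XQ Xsink [S_uniq S_cover S_topo S_blocks] s_uniq sX s_sorted.
have mem_s x : (x \in s) = (x \in X) by rewrite -sX inE.
have coverQ x : (x \in cover Q) = (x \in X) || (x \in cover (Q :\ X)).
  by rewrite /cover (big_setD1 X XQ) inE.
have notin_rest x : x \in X -> (x \in cover (Q :\ X)) = false.
  move=> xX; apply/bigcupP => -[Y]; rewrite !inE => /andP [YX YQ] xY.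
  move/trivIsetP: pi_trivI => /(_ Y X (subsetP Qpi _ YQ) (subsetP Qpi _ XQ) YX).
  by move/disjointFr/(_ xY); rewrite xX.
split.
- rewrite cat_uniq S_uniq s_uniq andbT /=; apply/hasPn => x.
  by rewrite mem_s S_cover => /notin_rest ->.
- by move=> x; rewrite mem_cat S_cover mem_s coverQ orbC.
- move=> u v; rewrite !coverQ !index_cat !S_cover => uQ vQ Euv.
  case: (boolP (u \in X)) => uX; case: (boolP (v \in X)) => vX.
  + rewrite !notin_rest // ltn_add2l.
    by apply: (sorted_acyclic_index E_acyclic s_sorted); rewrite ?mem_s.
  + move: vQ; rewrite (negbTE vX) => /bigcupP [Y].
    rewrite !inE => /andP [YX YQ] vY; case/negP: (Xsink Y YQ).
    rewrite /quot_rel (subsetP Qpi _ XQ) (subsetP Qpi _ YQ) eq_sym YX.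
    by apply/existsP; exists u; rewrite uX; apply/existsP; exists v; rewrite vY.
  + move: uQ; rewrite (negbTE uX) /= => uQ.
    by rewrite uQ notin_rest // (leq_trans _ (leq_addr _ _)) // index_mem S_cover.
  + move: uQ vQ; rewrite (negbTE uX) (negbTE vX) /= => uQ vQ.
    by rewrite uQ vQ S_topo.
- move=> Y YQ; case: (eqVneq Y X) => [->|YX].
    by exists S, s, [::]; rewrite cats0.
  have YQX : Y \in Q :\ X by rewrite !inE YX.
  have [l [t [r [tY t_sorted ->]]]] := S_blocks Y YQX.
  by exists l, t, (r ++ s); rewrite -!catA.
Qed.

Lemma exists_block_linearization (Q : {set {set V}}) :
  Q \subset pi -> exists S, block_linearization E Q S.
Proof.
elim: {Q}_.+1 {-2}Q (ltnSn #|Q|) => // n IH Q; rewrite ltnS => Qn Qpi.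
case: (set_0Vmem Q) => [->|[X0 X0Q]].
  by exists [::]; split => // [x|u|X]; rewrite ?inE // /cover big_set0 ?inE.
have [X XQ Xsink] := acyclic_sink quot_acyclic X0Q.
have [S lin] : exists S, block_linearization E (Q :\ X) S.
  apply: IH; last exact: subset_trans (subsetDl _ _) Qpi.
  by move: Qn; rewrite (cardsD1 X Q) XQ.
have [s [s_uniq sX s_sorted]] := pi_ham (subsetP Qpi _ XQ).
by exists (S ++ s); apply: (block_linearization_cat Qpi XQ Xsink lin).
Qed.

End Linearization.

Definition tau_step (V : finType) (E : rel V) (tau : V -> 'I_#|V|) : rel V :=
  fun u v => E u v && (nat_of_ord (tau v) == (tau u).+1).

Definition tau_source (V : finType) (E : rel V) (tau : V -> 'I_#|V|) : pred V :=
  fun x => [forall p, ~~ tau_step E tau p x].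

Section MaximalPaths.
Variables (V : finType) (E : rel V) (tau : V -> 'I_#|V|).
Hypothesis tau_inj : injective tau.
Local Notation step := (tau_step E tau).
Local Notation source := (tau_source E tau).

Lemma step_path_sub x t1 t2 :
  path step x t1 -> path step x t2 -> size t1 <= size t2 -> {subset t1 <= t2}.
Proof.
elim: t1 x t2 => [|a t1 IH] x [|b t2] //= /andP [/andP [_ /eqP tau_a] p1].
move=> /andP [/andP [_ /eqP tau_b] p2]; rewrite ltnS => size12.
have eq_ab : a = b by apply: tau_inj; apply: val_inj; rewrite /= tau_a tau_b.
by subst b => y; rewrite !inE => /predU1P [->|yt1]; rewrite ?eqxx // (IH a t2) ?orbT.
Qed.

Lemma step_path_head_lt x t y : path step x t -> y \in t -> tau x < tau y.
Proof.
move=> step_path; apply/allP: y.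
apply: (@order_path_min _ (fun u v => tau u < tau v)) => [u v w|]; first exact: ltn_trans.
by apply: sub_path step_path => u v /andP [_ /eqP ->].
Qed.

Lemma step_path_source x t y : path step x t -> y \in x :: t -> source y -> y = x.
Proof.
move=> step_path; rewrite inE => /predU1P [//|yt] /forallP y_source.
by have [p _ step_py] := path_mem_pred step_path yt; move: (y_source p); rewrite step_py.
Qed.

Lemma maximal_head_source x t : maximal_tauE_path E tau (x :: t) -> source x.
Proof.
move=> [[_ step_path] x_max]; apply/forallP => p; apply/negP => step_px.
have ext : tauE_path E tau (p :: x :: t) by split => //=; apply/andP.
have sub : [set y in x :: t] \subset [set y in p :: x :: t].
  by apply/subsetP => y; rewrite !inE => ->; rewrite orbT.
have /setP/(_ p) := x_max _ ext sub; rewrite !inE eqxx /= => /predU1P [eq_px|pt].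
  by move: step_px; rewrite eq_px => /andP [_ /eqP /n_Sn].
have := step_path_head_lt step_path pt.
by case/andP: step_px => _ /eqP ->; rewrite ltnNge leqnSn.
Qed.

Lemma maximal_same_head x t1 t2 :
  maximal_tauE_path E tau (x :: t1) -> maximal_tauE_path E tau (x :: t2) ->
  [set y in x :: t1] = [set y in x :: t2].
Proof.
wlog size12 : t1 t2 / size t1 <= size t2.
  move=> same m1 m2; case: (leqP (size t1) (size t2)) => [le12|/ltnW le21].
    exact: same.
  by rewrite (same t2 t1).
move=> [[_ p1] max1] [[_ p2] _]; apply: max1; first by split.
apply/subsetP => y; rewrite !inE => /predU1P [->|yt1]; first by rewrite eqxx.
by rewrite (step_path_sub p1 p2 size12) ?orbT.
Qed.

Lemma card_maximal_paths (pi P : {set {set V}}) :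
  (forall x, exists2 X, X \in pi & x \in X) ->
  {in pi, forall X : {set V}, {in X &, forall x y, tau x < tau y -> ~~ source y}} ->
  (forall A, A \in P <-> in_pi_tauE E tau A) -> #|P| <= #|pi|.
Proof.
move=> pi_cover pi_source P_spec.
apply: (@leq_card_rel _ _ P pi (fun A X => [exists x in X, (x \in A) && source x])).
  move=> A /P_spec [[|x t] [s_max ->]]; first by case: s_max => -[].
  have [X Xpi xX] := pi_cover x; exists X => //.
  by apply/existsP; exists x; rewrite xX inE mem_head (maximal_head_source s_max).
move=> A A' /P_spec [[|x t] [s_max ->]]; first by case: s_max => -[].
move=> /P_spec [[|x' t'] [s'_max ->]]; first by case: s'_max => -[].
move=> X Xpi /existsP [y /and3P [yX]]; rewrite in_set => yt y_source.
move=> /existsP [y' /and3P [y'X]]; rewrite in_set => y't' y'_source.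
have eq_yy' : y = y'.
  case: (ltngtP (tau y) (tau y')) => [lt_yy'|lt_y'y|/val_inj/tau_inj //].
    by move: y'_source; rewrite (negbTE (pi_source X Xpi y y' yX y'X lt_yy')).
  by move: y_source; rewrite (negbTE (pi_source X Xpi y' y y'X yX lt_y'y)).
have eq_yx := step_path_source s_max.1.2 yt y_source.
have eq_y'x' := step_path_source s'_max.1.2 y't' y'_source.
by subst x x' y'; apply: maximal_same_head.
Qed.

End MaximalPaths.

Section SeqRank.
Variables (V : finType) (S : seq V).
Hypotheses (S_uniq : uniq S) (S_total : forall x, x \in S).

Lemma index_lt_card x : index x S < #|V|.
Proof.
have -> : #|V| = size S by rewrite -(card_uniqP S_uniq); apply: eq_card => y; rewrite S_total.
by rewrite index_mem.
Qed.

Definition seq_rank x : 'I_#|V| := Ordinal (index_lt_card x).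

Lemma seq_rank_inj : injective seq_rank.
Proof. by move=> x y /(congr1 val)/(index_inj x (S_total x) (S_total y)). Qed.

Lemma seq_rank_topo_sort (E : rel V) :
  (forall u v, E u v -> index u S < index v S) -> topo_sort E seq_rank.
Proof. by split => //; apply: (inj_card_bij seq_rank_inj); rewrite card_ord. Qed.

Lemma seq_rank_segment_pred (E : rel V) l s r :
  S = l ++ s ++ r -> sorted E s ->
  {in s &, forall x y, seq_rank x < seq_rank y -> ~~ tau_source E seq_rank y}.
Proof.
move=> S_eq s_sorted; have := S_uniq; rewrite S_eq cat_uniq => /and3P [_ s_notin_l].
rewrite cat_uniq => /andP [s_uniq _].
have index_s z : z \in s -> index z S = size l + index z s.
  move=> zs; have zl : z \in l = false.
    by apply: contraNF s_notin_l => zl; apply/hasP; exists z; rewrite // mem_cat zs.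
  by rewrite S_eq index_cat zl index_cat zs.
move=> x y xs ys; rewrite /= !index_s // ltn_add2l => lt_xy.
have [j eq_j] : exists j, index y s = j.+1 by case: (index y s) lt_xy => [|j] //; exists j.
have js : j < size s by apply: ltnW; rewrite -eq_j index_mem.
apply/forallPn; exists (nth y s j); rewrite negbK; apply/andP; split.
  by move/(sortedP y): s_sorted => /(_ j); rewrite -eq_j index_mem nth_index // => ->.
by rewrite /= !index_s ?mem_nth // index_uniq // eq_j addnS.
Qed.

End SeqRank.

Theorem lemma4p1 (V : finType) (E : rel V) (pi : {set {set V}}) :
  acyclic E -> Hstar_partition E pi ->
  exists rho : V -> 'I_#|V|, topo_sort E rho /\
    exists P : {set {set V}},
      (forall A, A \in P <-> in_pi_tauE E rho A) /\ #|P| <= #|pi|.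
Proof.
move=> E_acyclic [/and3P [/eqP pi_cover pi_trivI _] _ pi_ham quot_acyclic].
have [S [S_uniq S_cover S_topo S_blocks]] :=
  exists_block_linearization E_acyclic pi_trivI pi_ham quot_acyclic (subxx pi).
have in_cover x : x \in cover pi by rewrite pi_cover inE.
have S_total x : x \in S by rewrite S_cover.
exists (seq_rank S_uniq S_total); split.
  by apply: seq_rank_topo_sort => u v; apply: S_topo.
have [P P_spec] := exists_finset_pred (in_pi_tauE E (seq_rank S_uniq S_total)).
exists P; split => //; apply: card_maximal_paths P_spec.
- exact: seq_rank_inj.
- by move=> x; apply/bigcupP: (in_cover x).
- move=> X /S_blocks [l [s [r [<- s_sorted S_eq]]]] x y; rewrite !inE.
  exact: (seq_rank_segment_pred S_eq s_sorted).
Qed.
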